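(* Let $m,n,w,d$ be positive integers with $w\le m$. For any positive integer $a$, $$A(am,n,w,d)\ge C\left(a,n,\left\lceil\frac{d}{w}\right\rceil\right)A(m,n,w,d).$$ Furthermore, if $a$ divides $w$ and $d\le nw\frac{a-1}{a}$, then $$A(am,n,w,d)\ge C\left(a,n,\left\lceil\frac{d}{w}\right\rceil\right)A(m,n,w,d)+A\left(m,an,\frac{w}{a},d\right).$$
   Context: $J(m,w)$ denotes the set of binary vectors of length $m$ and Hamming weight $w$. Elements of $J(m,w)^n$ are identified with $m\times n$ binary matrices all of whose columns have weight $w$, with binary Hamming distance. $A(m,n,w,d)$ is the maximum cardinality of a nonempty subset of $J(m,w)^n$ with pairwise Hamming distances at least $2d$. $C(q,n,d)$ is the maximum cardinality of a nonempty subset of $[q]^n$, $[q]=\{0,\dots,q-1\}$, with pairwise Hamming distances (number of differing coordinates) at least $d$. *)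

From mathcomp Require Import all_boot all_order all_algebra.
Set Implicit Arguments. Unset Strict Implicit. Unset Printing Implicit Defensive.

(* Elements of J(m,w)^n : m x n binary matrices all of whose columns have weight w. *)
Definition col_weights (m n w : nat) (M : 'M[bool]_(m, n)) : bool :=
  [forall j : 'I_n, #|[set i : 'I_m | M i j]| == w].

Definition bdist (m n : nat) (M N : 'M[bool]_(m, n)) : nat :=
  #|[set ij : 'I_m * 'I_n | M ij.1 ij.2 != N ij.1 ij.2]|.

Definition is_constw_code (m n w d : nat) (S : {set 'M[bool]_(m, n)}) : bool :=
  [&& S != set0,
      [forall M in S, col_weights w M] &
      [forall M in S, forall N in S, (M != N) ==> (2 * d <= bdist M N)]].

Definition A (m n w d : nat) : nat :=
  \max_(S : {set 'M[bool]_(m, n)} | is_constw_code w d S) #|S|.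

Definition qdist (q n : nat) (x y : {ffun 'I_n -> 'I_q}) : nat :=
  #|[set i : 'I_n | x i != y i]|.

Definition is_q_code (q n d : nat) (S : {set {ffun 'I_n -> 'I_q}}) : bool :=
  (S != set0) && [forall x in S, forall y in S, (x != y) ==> (d <= qdist x y)].

Definition C (q n d : nat) : nat :=
  \max_(S : {set {ffun 'I_n -> 'I_q}} | is_q_code d S) #|S|.

Definition ceil_div (d w : nat) : nat := (d + w.-1) %/ w.

From mathcomp Require Import all_boot all_order all_algebra.
From mathcomp Require Import zify.
Set Implicit Arguments. Unset Strict Implicit. Unset Printing Implicit Defensive.

(* Split the a*m rows into a blocks of m rows.  A word x of an a-ary code of
   length n and distance ceil(d/w), together with a matrix M of a code in
   J(m,w)^n, gives the matrix whose column j is column j of M placed in block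
   x_j.  Two such matrices with the same x are as far apart as their M's, and
   every coordinate where the x's differ contributes 2w, so they form a code of
   distance 2d.  If a divides w, a code in J(m,w/a)^(an) supplies further
   codewords, obtained by stacking its a groups of n columns on top of each
   other.  A placed column and a stacked column share at most w/a ones, so the
   two families are at distance at least 2n(w - w/a) >= 2d. *)

Section MinimumDistance.

Variable T : finType.
Implicit Types (dist : T -> T -> nat) (S : {set T}).

Definition dist_at_least dist (d : nat) S : bool :=
  [forall x in S, forall y in S, (x != y) ==> (d <= dist x y)].

Lemma dist_at_leastP dist d S :
  reflect {in S &, forall x y, x != y -> d <= dist x y} (dist_at_least dist d S).
Proof.
apply: (iffP forall_inP) => [Sd x y xS yS xy | Sd x xS].
  by move/forall_inP/(_ y yS): (Sd x xS); rewrite xy.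
by apply/forall_inP => y yS; apply/implyP; apply: Sd.
Qed.

Lemma bigmax_card_nonempty (Q : pred {set T}) :
  \max_(S | (S != set0) && Q S) #|S| = \max_(S | Q S) #|S|.
Proof.
rewrite big_mkcond [RHS]big_mkcond; apply: eq_bigr => S _.
by have [->|] := eqVneq S set0; rewrite ?cards0 //=; case: (Q _).
Qed.

Lemma bigmax_card_attained (Q : pred {set T}) :
  Q set0 -> exists2 S, Q S & \max_(S | Q S) #|S| = #|S|.
Proof.
move=> Q0; have [|S QS ->] := eq_bigmax_cond (fun S => #|S|) (A := Q).
  by apply/card_gt0P; exists set0.
by exists S.
Qed.

Section Images.

Variables (U : finType) (f : U -> T) (X : {set U}) (dist : T -> T -> nat) (d : nat).
Hypothesis f_dist : {in X &, forall p q, p != q -> d <= dist (f p) (f q)}.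

Lemma dist_at_least_imset : dist_at_least dist d (f @: X).
Proof.
apply/dist_at_leastP => _ _ /imsetP[p pX ->] /imsetP[q qX ->] fpq.
by apply: f_dist => //; apply: contraNneq fpq => ->.
Qed.

Lemma card_imset_dist : 0 < d -> (forall x, dist x x = 0) -> #|f @: X| = #|X|.
Proof.
move=> d_gt0 dist0; apply: card_in_imset => p q pX qX fpq.
apply/eqP; apply: contraTT d_gt0 => pq.
by rewrite -leqNgt -(dist0 (f p)) {2}fpq f_dist.
Qed.

End Images.

Section Unions.

Variables (dist : T -> T -> nat) (d : nat) (S1 S2 : {set T}).
Hypothesis cross_dist : {in S1 & S2, forall x y, d <= dist x y}.

Lemma dist_at_leastU : (forall x y, dist x y = dist y x) ->
  dist_at_least dist d S1 -> dist_at_least dist d S2 ->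
  dist_at_least dist d (S1 :|: S2).
Proof.
move=> distC /dist_at_leastP S1d /dist_at_leastP S2d.
apply/dist_at_leastP => x y; rewrite !inE.
case/orP=> [x1|x2] /orP[y1|y2]; [exact: S1d | | | exact: S2d] => _.
  exact: cross_dist.
by rewrite distC; apply: cross_dist.
Qed.

Lemma card_setU_dist : 0 < d -> (forall x, dist x x = 0) ->
  #|S1 :|: S2| = #|S1| + #|S2|.
Proof.
move=> d_gt0 dist0; rewrite cardsU disjoint_setI0 ?cards0 ?subn0 //.
apply/pred0P => x /=; apply/negbTE/andP => -[x1 x2].
by have := cross_dist x1 x2; rewrite dist0 leqNgt d_gt0.
Qed.

End Unions.

End MinimumDistance.

Lemma leq_mul_ceil_div d w : 0 < w -> d <= w * ceil_div d w.
Proof.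
move=> w_gt0; rewrite /ceil_div.
have := divn_eq (d + w.-1) w; have := ltn_pmod (d + w.-1) w_gt0; lia.
Qed.

Lemma card_set_sum (T : finType) (p : pred T) : #|[set x | p x]| = \sum_x (p x : nat).
Proof. by rewrite -sum1_card big_mkcond; apply: eq_bigr => x _; rewrite inE; case: (p x). Qed.

Lemma sum_pred1_andb (I J : finType) (c : I) (b : I -> J -> bool) :
  \sum_i \sum_j ((i == c) && b i j : nat) = \sum_j (b c j : nat).
Proof.
rewrite (bigD1 c) //= [X in _ + X]big1 => [|i /negbTE ic]; last first.
  by apply: big1 => j _; rewrite ic.
by rewrite addn0; apply: eq_bigr => j _; rewrite eqxx.
Qed.

Lemma big_mxvec_index (R : Type) (idx : R) (op : Monoid.com_law idx) p q
    (F : 'I_(p * q) -> R) :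
  \big[op/idx]_r F r = \big[op/idx]_(k < p) \big[op/idx]_(i < q) F (mxvec_index k i).
Proof. by rewrite (reindex _ (curry_mxvec_bij p q)) pair_big; apply: eq_bigr => -[]. Qed.

Section HammingDistances.

Variables m n : nat.
Implicit Types M N : 'M[bool]_(m, n).

Lemma bdistE M N : bdist M N = \sum_j \sum_i (M i j != N i j : nat).
Proof. by rewrite /bdist card_set_sum [RHS]exchange_big pair_big. Qed.

Lemma bdistC M N : bdist M N = bdist N M.
Proof. by rewrite !bdistE; apply: eq_bigr => j _; apply: eq_bigr => i _; rewrite eq_sym. Qed.

Lemma bdistxx M : bdist M M = 0.
Proof. by rewrite bdistE big1 // => j _; rewrite big1 // => i _; rewrite eqxx. Qed.

Lemma col_weightsP w M :
  reflect (forall j, \sum_i (M i j : nat) = w) (col_weights w M).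
Proof.
have wtE j : #|[set i | M i j]| = \sum_i (M i j : nat) by apply: card_set_sum.
by apply: (iffP forallP) => Mw j; [rewrite -wtE; apply/eqP | rewrite wtE Mw].
Qed.

Lemma qdistE q (x y : {ffun 'I_n -> 'I_q}) : qdist x y = \sum_j (x j != y j : nat).
Proof. by rewrite /qdist card_set_sum. Qed.

End HammingDistances.

Definition constw_code m n w d (S : {set 'M[bool]_(m, n)}) : bool :=
  [forall M in S, col_weights w M] && dist_at_least (@bdist m n) (2 * d) S.

Lemma A_bigmax m n w d :
  A m n w d = \max_(S : {set 'M[bool]_(m, n)} | constw_code w d S) #|S|.
Proof. exact: bigmax_card_nonempty. Qed.

Lemma leq_card_A m n w d (S : {set 'M[bool]_(m, n)}) :
  constw_code w d S -> #|S| <= A m n w d.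
Proof. by rewrite A_bigmax; apply: leq_bigmax_cond. Qed.

Lemma A_attained m n w d :
  exists2 S : {set 'M[bool]_(m, n)}, constw_code w d S & A m n w d = #|S|.
Proof.
rewrite A_bigmax; apply: bigmax_card_attained.
by apply/andP; split; [apply/forall_inP => M | apply/dist_at_leastP => M N]; rewrite inE.
Qed.

Lemma C_attained q n d :
  exists2 Q : {set {ffun 'I_n -> 'I_q}}, dist_at_least (@qdist q n) d Q & C q n d = #|Q|.
Proof.
rewrite /C bigmax_card_nonempty; apply: bigmax_card_attained.
by apply/dist_at_leastP => x y; rewrite inE.
Qed.

Lemma constw_codeU m n w d (S1 S2 : {set 'M[bool]_(m, n)}) :
  constw_code w d S1 -> constw_code w d S2 ->
  {in S1 & S2, forall M N, 2 * d <= bdist M N} -> constw_code w d (S1 :|: S2).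
Proof.
move=> /andP[/forall_inP S1w S1d] /andP[/forall_inP S2w S2d] cross.
apply/andP; split; last exact: dist_at_leastU (@bdistC m n) S1d S2d.
by apply/forall_inP => M; rewrite inE => /orP[/S1w | /S2w].
Qed.

Section BlockMatrices.

Variables (a m n : nat).
Implicit Types (x y : {ffun 'I_n -> 'I_a}) (M N : 'M[bool]_(m, n)) (P : 'M[bool]_(m, a * n)).

(* Row [mxvec_index k i] of an [a * m]-row matrix is read as row [i] of its [k]-th block of rows. *)
Definition place x M : 'M[bool]_(a * m, n) :=
  \matrix_(r, j) mxvec (\matrix_(k, i) ((k == x j) && M i j)) ord0 r.

Definition stack P : 'M[bool]_(a * m, n) :=
  \matrix_(r, j) mxvec (\matrix_(k, i) P i (mxvec_index k j)) ord0 r.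

Lemma placeE x M k i j : place x M (mxvec_index k i) j = (k == x j) && M i j.
Proof. by rewrite !mxE mxvecE mxE. Qed.

Lemma stackE P k i j : stack P (mxvec_index k i) j = P i (mxvec_index k j).
Proof. by rewrite !mxE mxvecE mxE. Qed.

Lemma bdist_blocksE (M N : 'M[bool]_(a * m, n)) : bdist M N =
  \sum_j \sum_(k < a) \sum_(i < m) (M (mxvec_index k i) j != N (mxvec_index k i) j : nat).
Proof. by rewrite bdistE; apply: eq_bigr => j _; rewrite big_mxvec_index. Qed.

Lemma col_weights_place w x M : col_weights w M -> col_weights w (place x M).
Proof.
move/col_weightsP=> Mw; apply/col_weightsP => j; rewrite big_mxvec_index -(Mw j).
rewrite -(sum_pred1_andb (x j) (fun _ i => M i j)).
by apply: eq_bigr => k _; apply: eq_bigr => i _; rewrite placeE.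
Qed.

Lemma col_weights_stack t P : col_weights t P -> col_weights (a * t) (stack P).
Proof.
move/col_weightsP=> Pt; apply/col_weightsP => j.
rewrite big_mxvec_index (eq_bigr (fun=> t)) ?sum_nat_const ?card_ord // => k _.
by rewrite -(Pt (mxvec_index k j)); apply: eq_bigr => i _; rewrite stackE.
Qed.

Lemma bdist_place x M N : bdist (place x M) (place x N) = bdist M N.
Proof.
rewrite bdist_blocksE bdistE; apply: eq_bigr => j _.
rewrite -(sum_pred1_andb (x j) (fun _ i => M i j != N i j)).
by apply: eq_bigr => k _; apply: eq_bigr => i _; rewrite !placeE; case: (k == x j).
Qed.

Lemma bdist_place_neq w x y M N : col_weights w M -> col_weights w N ->
  2 * w * qdist x y <= bdist (place x M) (place y N).
Proof.
move=> /col_weightsP Mw /col_weightsP Nw.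
rewrite qdistE bdist_blocksE big_distrr; apply: leq_sum => j _ /=.
have [_|xy] := eqVneq (x j) (y j); first by rewrite muln0.
rewrite muln1 mul2n -addnn -{1}(Mw j) -(Nw j).
rewrite -(sum_pred1_andb (x j) (fun _ i => M i j)) -(sum_pred1_andb (y j) (fun _ i => N i j)).
rewrite -big_split; apply: eq_leq; apply: eq_bigr => k _.
rewrite -big_split; apply: eq_bigr => i _; rewrite !placeE.
have [->|_] := eqVneq k (x j); first by rewrite (negbTE xy); case: (M i j).
by case: (k == y j); case: (N i j).
Qed.

Lemma bdist_place_stack w t x M P : col_weights w M -> col_weights t P ->
  n * (w + a * t) <= bdist (place x M) (stack P) + n * (2 * t).
Proof.
move=> /col_weightsP Mw /col_weightsP Pt.
have sum_const c : n * c = \sum_(j < n) c by rewrite sum_nat_const card_ord.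
rewrite bdist_blocksE !sum_const -big_split /=.
apply: leq_sum => j _.
have overlap : \sum_(k < a) \sum_(i < m) ((k == x j) && P i (mxvec_index k j) : nat) = t.
  by rewrite (sum_pred1_andb (x j) (fun k i => P i (mxvec_index k j))) Pt.
have weights : \sum_(k < a) \sum_(i < m) ((k == x j) && M i j + P i (mxvec_index k j)) = w + a * t.
  under eq_bigr do rewrite big_split Pt.
  by rewrite big_split (sum_pred1_andb (x j) (fun _ i => M i j)) Mw sum_nat_const card_ord.
rewrite -weights -overlap big_distrr -big_split; apply: leq_sum => k _ /=.
rewrite big_distrr -big_split; apply: leq_sum => i _ /=.
by rewrite placeE stackE; case: (k == x j); case: (M i j); case: (P i _).
Qed.

Lemma bdist_stack P P' : bdist (stack P) (stack P') = bdist P P'.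
Proof.
rewrite bdist_blocksE bdistE big_mxvec_index exchange_big.
by do 3!apply: eq_bigr => ? _; rewrite !stackE.
Qed.

Definition place_code (Q : {set {ffun 'I_n -> 'I_a}}) (S : {set 'M[bool]_(m, n)}) :=
  [set place p.1 p.2 | p in setX Q S].

Definition stack_code (R : {set 'M[bool]_(m, a * n)}) := stack @: R.

Section PlaceCode.

Variables (w d : nat) (Q : {set {ffun 'I_n -> 'I_a}}) (S : {set 'M[bool]_(m, n)}).
Hypotheses (w_gt0 : 0 < w) (Q_dist : dist_at_least (@qdist a n) (ceil_div d w) Q).
Hypothesis S_code : constw_code w d S.

Lemma bdist_place_pairs :
  {in setX Q S &, forall p q, p != q -> 2 * d <= bdist (place p.1 p.2) (place q.1 q.2)}.
Proof.
case/andP: S_code => /forall_inP Sw /dist_at_leastP Sd; move/dist_at_leastP: Q_dist => Qd.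
move=> [x M] [y N] /setXP[xQ MS] /setXP[yQ NS] /=.
have [<-|xy] := eqVneq x y => [xM_xN | _].
  by rewrite bdist_place; apply: Sd => //; apply: contraNneq xM_xN => ->.
apply: leq_trans (bdist_place_neq x y (Sw M MS) (Sw N NS)).
rewrite -mulnA leq_mul2l /= (leq_trans (leq_mul_ceil_div d w_gt0)) //.
by rewrite leq_mul2l Qd ?orbT.
Qed.

Lemma constw_place_code : constw_code w d (place_code Q S).
Proof.
case/andP: S_code => /forall_inP Sw _; apply/andP; split.
  by apply/forall_inP => _ /imsetP[[x M] /setXP[_ MS] ->]; apply: col_weights_place; apply: Sw.
exact: dist_at_least_imset bdist_place_pairs.
Qed.

Lemma card_place_code : 0 < d -> #|place_code Q S| = #|Q| * #|S|.
Proof.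
move=> d_gt0; rewrite -cardsX.
by apply: card_imset_dist bdist_place_pairs _ (@bdistxx _ _); rewrite muln_gt0.
Qed.

End PlaceCode.

Lemma constw_stack_code t d R : constw_code t d R -> constw_code (a * t) d (stack_code R).
Proof.
case/andP=> /forall_inP Rt /dist_at_leastP Rd; apply/andP; split.
  by apply/forall_inP => _ /imsetP[P PR ->]; apply/col_weights_stack/Rt.
by apply: dist_at_least_imset => P P' PR P'R; rewrite bdist_stack; apply: Rd.
Qed.

Lemma card_stack_code t d R : 0 < d -> constw_code t d R -> #|stack_code R| = #|R|.
Proof.
move=> d_gt0 /andP[_ /dist_at_leastP Rd].
apply: (card_imset_dist (d := 2 * d)) (@bdistxx _ _); last by rewrite muln_gt0.
by move=> P P' PR P'R; rewrite bdist_stack; apply: Rd.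
Qed.

Lemma bdist_place_stack_code w t d Q S R : 0 < a -> a * t = w ->
  a * d <= n * w * (a - 1) -> constw_code w d S -> constw_code t d R ->
  {in place_code Q S & stack_code R, forall X Y, 2 * d <= bdist X Y}.
Proof.
move=> a_gt0 wE d_le /andP[/forall_inP Sw _] /andP[/forall_inP Rt _].
move=> _ _ /imsetP[[x M] /setXP[_ MS] ->] /imsetP[P PR ->] /=.
have d_le_nt : d <= n * t * (a - 1).
  by rewrite -(leq_pmul2l a_gt0); apply: leq_trans d_le _; rewrite -wE; nia.
have := bdist_place_stack x (Sw M MS) (Rt P PR); rewrite -wE; nia.
Qed.

End BlockMatrices.

Theorem proposition8 (m n w d a : nat) :
  0 < m -> 0 < n -> 0 < w -> 0 < d -> w <= m -> 0 < a ->
  C a n (ceil_div d w) * A m n w d <= A (a * m) n w d /\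
  (a %| w -> a * d <= n * w * (a - 1) ->
   C a n (ceil_div d w) * A m n w d + A m (a * n) (w %/ a) d <= A (a * m) n w d).
Proof.
move=> _ _ w_gt0 d_gt0 _ a_gt0.
have [Q Q_dist ->] := C_attained a n (ceil_div d w).
have [S S_code ->] := A_attained m n w d.
have QS_code := constw_place_code w_gt0 Q_dist S_code.
rewrite -(card_place_code w_gt0 Q_dist S_code d_gt0).
split=> [|a_dvd_w d_le]; first exact: leq_card_A.
have [R R_code ->] := A_attained m (a * n) (w %/ a) d.
have wE : a * (w %/ a) = w by rewrite mulnC divnK.
have cross := bdist_place_stack_code (Q := Q) a_gt0 wE d_le S_code R_code.
rewrite -(card_stack_code d_gt0 R_code) -(card_setU_dist cross _ (@bdistxx _ _)) ?muln_gt0 //.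
apply/leq_card_A/constw_codeU => //.
by rewrite -wE; apply: constw_stack_code.
Qed.
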